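(* For every prime power $k$, the graph $G_k$ has girth at least $6$.
   Context: A Latin square of order $k$ is a partition $L = L(1) \cup \dots \cup L(k)$ of $A = [k]\times[k]$ such that each row $A[i,\cdot] = \{(i,j) : j \in [k]\}$ and each column $\{(j,i): j\in[k]\}$ meets each part $L(n)$ in exactly one position. Two Latin squares $L_1, L_2$ of order $k$ are orthogonal if $|L_1(n_1)\cap L_2(n_2)| = 1$ for all $n_1, n_2 \in [k]$. For a prime power $k$, fix $k-1$ mutually orthogonal Latin squares $L_1,\dots,L_{k-1}$ of order $k$. Let $R = \{A[i,\cdot] : i \in [k]\}$ (the rows) and $\mathcal{L} = \{L_s(n) : s \in [k-1], n \in [k]\}$. The graph $G_k$ has vertex set $A \cup R \cup \mathcal{L}$ (disjoint union, $2k^2$ vertices) and an edge between $p \in A$ and $S \in R \cup \mathcal{L}$ whenever $p \in S$; no other edges. The girth is the length of a shortest cycle. *)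

From mathcomp Require Import all_boot.
Set Implicit Arguments. Unset Strict Implicit. Unset Printing Implicit Defensive.

(* Positions A = [k] x [k] are pairs of ordinals.  A Latin square
   L = L(1) u ... u L(k) (a partition of A into k labelled parts) is
   represented by its labelling function f : A -> [k], with L(n) = f^-1(n). *)
Definition cell (k : nat) := ('I_k * 'I_k)%type.

Definition is_latin_square (k : nat) (f : cell k -> 'I_k) : Prop :=
  (forall (i n : 'I_k), #|[set j : 'I_k | f (i, j) == n]| = 1) /\
  (forall (i n : 'I_k), #|[set j : 'I_k | f (j, i) == n]| = 1).

Definition orthogonal (k : nat) (f g : cell k -> 'I_k) : Prop :=
  forall (n1 n2 : 'I_k), #|[set p : cell k | (f p == n1) && (g p == n2)]| = 1.

Definition MOLS (k : nat) (L : 'I_(k - 1) -> cell k -> 'I_k) : Prop :=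
  (forall s, is_latin_square (L s)) /\
  (forall s t, s != t -> orthogonal (L s) (L t)).

(* Vertices of G_k: A  +  (R  +  Lcal), where the row A[i,.] is indexed by i
   and the part L_s(n) is indexed by (s, n). *)
Definition Gk_vertex (k : nat) : finType :=
  (cell k + ('I_k + ('I_(k - 1) * 'I_k)))%type.

Definition Gk_incident (k : nat) (L : 'I_(k - 1) -> cell k -> 'I_k)
  (p : cell k) (S : 'I_k + ('I_(k - 1) * 'I_k)) : bool :=
  match S with
  | inl i => p.1 == i
  | inr (s, n) => L s p == n
  end.

Definition Gk_adj (k : nat) (L : 'I_(k - 1) -> cell k -> 'I_k) : rel (Gk_vertex k) :=
  fun u v =>
    match u, v with
    | inl p, inr X => Gk_incident L p X
    | inr X, inl p => Gk_incident L p X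
    | _, _ => false
    end.

(* A cycle of length m >= 3 is a duplicate-free sequence v_0 ... v_(m-1) with
   v_i ~ v_(i+1) (indices mod m).  Girth >= g : every cycle has length >= g
   (vacuous if the graph is acyclic, i.e. girth = infinity). *)
Definition girth_at_least (T : finType) (e : rel T) (g : nat) : Prop :=
  forall c : seq T, uniq c -> cycle e c -> 2 < size c -> g <= size c.

Definition prime_power (k : nat) : Prop :=
  exists p e : nat, prime p /\ 0 < e /\ k = p ^ e.

(* G_k is the incidence graph of the points A and the lines R u Lcal, so it
   is bipartite and has no odd cycles.  A 4-cycle would be two distinct
   points on two distinct common lines; but two distinct lines meet in at
   most one cell, since a row meets each symbol class of a Latin square once
   and symbol classes of two orthogonal squares meet once. *)
From mathcomp Require Import all_boot.

Section IncidenceGraph.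

Variables (P B : finType) (inc : P -> B -> bool).

Definition incidence_graph : rel (P + B) :=
  fun u v =>
    match u, v with
    | inl p, inr X => inc p X
    | inr X, inl p => inc p X
    | _, _ => false
    end.

Definition is_point (u : P + B) : bool := if u is inl _ then true else false.

Lemma incidence_graph_path_side u s :
  path incidence_graph u s -> is_point (last u s) = is_point u (+) odd (size s).
Proof.
elim: s u => [|v s IHs] u /=; first by rewrite addbF.
case/andP=> Euv /IHs ->.
have -> : is_point v = ~~ is_point u by case: u v Euv => [?|?] [?|?].
by rewrite addNb addbN.
Qed.

Lemma incidence_graph_cycle_even c :
  cycle incidence_graph c -> ~~ odd (size c).
Proof.
case: c => [|u s] //= /incidence_graph_path_side.
by rewrite last_rcons size_rcons /=; case: is_point; case: odd.
Qed.

Hypothesis inc_two_lines : forall {p q X Y},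
  X != Y -> inc p X -> inc q X -> inc p Y -> inc q Y -> p = q.

Lemma incidence_graph_no_4cycle {u v w x} :
  uniq [:: u; v; w; x] -> ~~ cycle incidence_graph [:: u; v; w; x].
Proof.
case: u => [p1|X1]; case: v => [X2|p2]; case: w => [p3|X3]; case: x => [X4|p4] //=;
  rewrite ?andbF // !inE /= !andbT => /andP[/norP[ne1 _] ne2];
  apply/negP => /and4P[I1 I2 I3 I4].
- by move: ne1; rewrite (inc_two_lines ne2 I1 I2 I4 I3) eqxx.
- by move: ne2; rewrite (inc_two_lines ne1 I1 I4 I2 I3) eqxx.
Qed.

Lemma incidence_graph_girth6 : girth_at_least incidence_graph 6.
Proof.
move=> c Uc /[dup] Cc /incidence_graph_cycle_even.
case: c Uc Cc => [|u [|v [|w [|x [|y [|z r]]]]]] //= Uc Cc _ _.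
by case/negP: (incidence_graph_no_4cycle Uc).
Qed.

End IncidenceGraph.

Lemma MOLS_incident_two_lines k (L : 'I_(k - 1) -> cell k -> 'I_k) :
  MOLS L -> forall p q X Y, X != Y ->
  Gk_incident L p X -> Gk_incident L q X ->
  Gk_incident L p Y -> Gk_incident L q Y -> p = q.
Proof.
case=> latin orth p q X Y.
have row_symbol i s n : p.1 == i -> q.1 == i -> L s p == n -> L s q == n -> p = q.
  case: p q => [i1 j1] [i2 j2] /= /eqP-> /eqP-> Lp Lq.
  have /card_le1_eqP eq_j := eq_leq ((latin s).1 i n).
  by rewrite (eq_j j1 j2) // inE.
case: X Y => [i|[s n]] [j|[t m]] /=.
- by move=> ij /eqP pi _ /eqP pj; move: ij; rewrite -pi -pj eqxx.
- by move=> _ Pi Qi Ps Qs; apply: (row_symbol i t m).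
- by move=> _ Ps Qs Pj Qj; apply: (row_symbol j s n).
- have [<-|st] := eqVneq s t => [nm /eqP pn _ /eqP pm|_ Ps Qs Pt Qt].
    by move: nm; rewrite -pn -pm eqxx.
  have /card_le1_eqP eq_pq := eq_leq (orth s t st n m).
  by apply: eq_pq; rewrite inE ?Ps ?Qs ?Pt ?Qt.
Qed.

(* The prime power hypothesis only guarantees that k - 1 MOLS exist; the
   girth bound holds for any family of MOLS. *)
Theorem lemma2 (k : nat) (L : 'I_(k - 1) -> cell k -> 'I_k) :
  prime_power k -> MOLS L -> girth_at_least (Gk_adj L) 6.
Proof.
move=> _ /MOLS_incident_two_lines.
exact: incidence_graph_girth6.
Qed.
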